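(* For every integer $m\ge 0$ and every integer $n\ge 0$, $$x^n=\sum_{k=0}^{\lfloor n/2\rfloor}\frac{n!}{k!\,(n-2k)!}\,\frac{(n+m-2k)!}{(n+m-k)!}\,(-s)^k\, l_{n-2k}(x,m,s).$$ Consequently, if $\Lambda_m$ denotes the linear functional on polynomials in $x$ (with coefficients rational functions of $s$) determined by $\Lambda_m(l_n(x,m,s))=[n=0]$ for all $n\ge 0$, then $\Lambda_m(x^{2n+1})=0$ and $$\Lambda_m(x^{2n})=(-s)^n\,\sigma(m,n)=(-s)^n\frac{(2n)!\,m!}{n!\,(m+n)!}\quad\text{for all } n\ge 0.$$
   Context: For an integer $m\ge 0$ and indeterminates $x,s$, $$l_n(x,m,s)=\sum_{k=0}^{\lfloor n/2\rfloor}\frac{n!}{k!\,(n-2k)!}\,\frac{1}{\prod_{j=1}^{k}(m+n-j)}\,s^k x^{n-2k}\qquad(n\ge 0),$$ empty products being $1$. The normalized super Catalan numbers are $\sigma(m,n)=\frac{(2n)!\,m!}{n!\,(n+m)!}$. $[P]$ is the Iverson bracket. *)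

From HB Require Import structures.
From mathcomp Require Import all_boot all_order all_algebra.
Set Implicit Arguments. Unset Strict Implicit. Unset Printing Implicit Defensive.
Import Order.TTheory GRing.Theory Num.Theory.
Local Open Scope ring_scope.

Definition lpoly (F : fieldType) (m n : nat) (s : F) : {poly F} :=
  \sum_(k < n./2.+1)
     (((n`!)%:R / ((k`! * (n - 2 * k)`!)%:R))
        / (\prod_(1 <= j < k.+1) ((m + n - j)%:R : F))
        * s ^+ k) *: 'X^(n - 2 * k).

Definition sigmaSC (F : fieldType) (m n : nat) : F :=
  ((2 * n)`! * m`!)%:R / ((n`! * (n + m)`!)%:R).

(* Comparing coefficients of x^(n-2j), the expansion of x^n amounts to
   \sum_(k <= j) inv_coef n m k (-1)^k lpoly_coef m (n-2k) (j-k) = [j = 0].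
   For j > 0, j times the k-th summand is c (H_k - H_(k+1)) with c = n!/(j!(n-2j)!)
   and H_k = (-1)^k k C(j,k) (n+m-k-j)!/(n+m-k)!; the sum telescopes to
   c (H_0 - H_(j+1)) = 0.  Applying Lambda_m to the expansion of x^n kills every
   l_(n-2k) except l_0, so only the term n = 2k survives, and its coefficient is
   the super Catalan number. *)

From mathcomp Require Import all_boot all_algebra.
From mathcomp Require Import ring zify.
Import GRing.Theory.
Local Open Scope ring_scope.

Lemma ltn_half_mul2 n k : (k < n./2.+1)%N = (2 * k <= n)%N.
Proof. by rewrite ltnS geq_half_double mul2n. Qed.

Lemma prod_subn_ffact M i : (\prod_(1 <= t < i.+1) (M - t) = M.-1 ^_ i)%N.
Proof.
rewrite ffact_prod big_add1 /= big_mkord.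
by apply: eq_bigr => t _; lia.
Qed.

Section LpolyInversion.

Variables (F : fieldType) (s : F).
Hypothesis F_char0 : [pchar F] =i pred0.

Lemma natf_eq0 n : (n%:R == 0 :> F) = (n == 0)%N.
Proof. by move/pcharf0P: F_char0. Qed.

Lemma natf_fact_neq0 n : n`!%:R != 0 :> F.
Proof. by rewrite natf_eq0 -lt0n fact_gt0. Qed.
#[local] Hint Resolve natf_fact_neq0 : core.

Lemma natf_factS n : n.+1`!%:R = n.+1%:R * n`!%:R :> F.
Proof. by rewrite factS natrM. Qed.

Lemma natf_factV n : (n`!%:R : F)^-1 = n.+1%:R / n.+1`!%:R.
Proof. by rewrite natf_factS invfM mulrA divff ?mul1r // natf_eq0. Qed.

Lemma natf_bin n k : (k <= n)%N ->
  'C(n, k)%:R = n`!%:R / (k`!%:R * (n - k)`!%:R) :> F.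
Proof. by move=> le_kn; rewrite -(bin_fact le_kn) !natrM mulfK // mulf_neq0. Qed.

Definition lpoly_coef (m N i : nat) : F :=
  N`!%:R / (i`! * (N - 2 * i)`!)%:R / \prod_(1 <= t < i.+1) ((m + N - t)%:R : F).

Definition inv_coef (n m k : nat) : F :=
  n`!%:R / (k`! * (n - 2 * k)`!)%:R * ((n + m - 2 * k)`!%:R / (n + m - k)`!%:R).

Lemma lpoly_coefE m N i : (2 * i <= N)%N ->
  lpoly_coef m N i =
  (N`! * ((m + N).-1 - i)`!)%:R / (i`! * (N - 2 * i)`! * (m + N).-1`!)%:R.
Proof.
move=> le2iN; rewrite /lpoly_coef -natr_prod prod_subn_ffact.
have le_i : (i <= (m + N).-1)%N by lia.
rewrite -(ffact_fact le_i) !natrM; field.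
by rewrite !natf_fact_neq0 natf_eq0 -lt0n ffact_gt0 le_i.
Qed.

Definition telescoper (n m j k : nat) : F :=
  (-1) ^+ k * k%:R * 'C(j, k)%:R * (n + m - k - j)`!%:R / (n + m - k)`!%:R.

Lemma inv_coef_telescope n m j k : (2 * j <= n)%N -> (k <= j)%N ->
  j%:R * (inv_coef n m k * (-1) ^+ k * lpoly_coef m (n - 2 * k) (j - k)) =
  n`!%:R / (j`! * (n - 2 * j)`!)%:R * (telescoper n m j k - telescoper n m j k.+1).
Proof.
move=> le2jn lekj; rewrite /inv_coef /telescoper lpoly_coefE ?natrM; last by lia.
have [r ->] : exists r, n = (r + 2 * j)%N by exists (n - 2 * j)%N; lia.
have [i ->] : exists i, j = (k + i)%N by exists (j - k)%N; lia.
have -> : (r + 2 * (k + i) - 2 * (k + i) = r)%N by lia.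
have -> : (k + i - k = i)%N by lia.
have -> : (r + 2 * (k + i) - 2 * k = r + 2 * i)%N by lia.
have -> : (r + 2 * i - 2 * i = r)%N by lia.
case: i => [|i].
  rewrite addn0 binn (bin_small (ltnSn k)) !muln0 !addn0 subn0 fact0 mul1r.
  have -> : (r + 2 * k + m - 2 * k = r + m)%N by lia.
  have -> : (r + 2 * k + m - k - k = r + m)%N by lia.
  rewrite mulr0 !mul0r subr0.
  by field; rewrite !natf_fact_neq0.
have -> : (r + 2 * (k + i.+1) + m - 2 * k = (m + r + i + i.+1).+1)%N by lia.
have -> : ((m + (r + 2 * i.+1)).-1 - i.+1 = m + r + i)%N by lia.
have -> : ((m + (r + 2 * i.+1)).-1 = m + r + i + i.+1)%N by lia.
have -> : (r + 2 * (k + i.+1) + m - k - (k + i.+1) = (m + r + i).+1)%N by lia.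
have -> : (r + 2 * (k + i.+1) + m - k.+1 - (k + i.+1) = m + r + i)%N by lia.
have -> : (r + 2 * (k + i.+1) + m - k = (m + r + k + i + i.+1).+1)%N by lia.
have -> : (r + 2 * (k + i.+1) + m - k.+1 = m + r + k + i + i.+1)%N by lia.
rewrite -(mulrA _ k.+1%:R) -(natrM _ k.+1) mul_bin_left addKn natrM.
rewrite !natf_bin ?leq_addr // addKn (natf_factS (m + r + i + i.+1)) (natf_factS (m + r + i)).
rewrite (natf_factV (m + r + k + i + i.+1)) exprS.
by field; rewrite !natf_fact_neq0.
Qed.

Lemma sum_inv_coef_lpoly_coef n m j : (2 * j <= n)%N ->
  \sum_(k < j.+1) inv_coef n m k * (-1) ^+ k * lpoly_coef m (n - 2 * k) (j - k) =
  (j == 0)%:R.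
Proof.
move=> le2jn; have [-> | j_gt0] := posnP j.
  rewrite big_ord1 /inv_coef /lpoly_coef big_geq // !subn0 fact0 /= expr0 mulr1.
  by field; rewrite oner_neq0 !natf_fact_neq0.
apply: (mulfI (_ : j%:R != 0)); first by rewrite natf_eq0 -lt0n.
rewrite mulr_sumr mulr0.
rewrite (eq_bigr _ (fun (k : 'I_j.+1) _ => inv_coef_telescope n m j k le2jn (ltn_ord k))).
rewrite -mulr_sumr -(big_mkord xpredT (fun k => telescoper n m j k - telescoper n m j k.+1)).
rewrite (telescope_sumr_eq (fun k => - telescoper n m j k)) // => [|k _]; last first.
  by rewrite opprK addrC.
by rewrite /telescoper bin_small // !(mulr0, mul0r, oppr0, subr0).
Qed.

Lemma coef_lpoly m N d :
  (lpoly m N s)`_d = \sum_(i < N./2.+1 | d == (N - 2 * i)%N) lpoly_coef m N i * s ^+ i.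
Proof.
rewrite /lpoly coef_sum [RHS]big_mkcond; apply: eq_bigr => i _.
by rewrite coefZ coefXn mulr_natr mulrb.
Qed.

Lemma coef_lpoly_subn m N i : (2 * i <= N)%N ->
  (lpoly m N s)`_(N - 2 * i) = lpoly_coef m N i * s ^+ i.
Proof.
move=> le2iN; rewrite coef_lpoly (eq_bigl (fun i' : 'I__ => i' == i :> nat)).
  by rewrite (big_ord1_eq _ (fun i => lpoly_coef m N i * s ^+ i)) ltn_half_mul2 le2iN.
by move=> i'; have := ltn_ord i'; rewrite ltn_half_mul2 => ?; apply/eqP/eqP; lia.
Qed.

Lemma coef_lpoly_gt m N d : (N < d)%N -> (lpoly m N s)`_d = 0.
Proof. by move=> ltNd; rewrite coef_lpoly big_pred0 // => i; apply/negbTE/eqP; lia. Qed.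

Lemma Xn_lpoly_expansion m n :
  'X^n = \sum_(k < n./2.+1) (inv_coef n m k * (- s) ^+ k) *: lpoly m (n - 2 * k) s.
Proof.
apply/polyP => d; rewrite coefXn coef_sum.
have [j /eqP -> | no_j] := pickP (fun j : 'I_(n./2.+1) => d == (n - 2 * j)%N); last first.
  rewrite (_ : (d == n) = false); last by move: (no_j ord0) => /=; rewrite muln0 subn0.
  rewrite big1 // => k _; rewrite coefZ coef_lpoly big_pred0 ?mulr0 // => i.
  have := ltn_ord k; have := ltn_ord i; rewrite !ltn_half_mul2 => le2i le2k.
  apply/negbTE/eqP => eq_d; move: (no_j (inord (k + i))) => /=.
  by rewrite eq_d inordK ?ltn_half_mul2 => [/negbT/eqP|]; lia.
have le2jn : (2 * j <= n)%N by rewrite -ltn_half_mul2.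
transitivity (s ^+ j * \sum_(k < j.+1)
    inv_coef n m k * (-1) ^+ k * lpoly_coef m (n - 2 * k) (j - k)).
  have -> : (n - 2 * j == n)%N = (j == 0 :> nat) by apply/eqP/eqP; lia.
  by rewrite sum_inv_coef_lpoly_coef //; case: eqP => [->|_]; rewrite ?mulr1 ?mulr0.
rewrite mulr_sumr (big_ord_widen n./2.+1 (fun k => s ^+ j *
    (inv_coef n m k * (-1) ^+ k * lpoly_coef m (n - 2 * k) (j - k)))) ?ltn_ord //.
rewrite big_mkcond; apply: eq_bigr => k _; rewrite coefZ.
have := ltn_ord k; rewrite ltn_half_mul2 => le2kn.
case: ltnP => [|lt_jk]; last by rewrite coef_lpoly_gt ?mulr0 //; lia.
rewrite ltnS => le_kj; rewrite (_ : (n - 2 * j = n - 2 * k - 2 * (j - k))%N); last by lia.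
rewrite coef_lpoly_subn; last by lia.
by rewrite -{1}(subnKC le_kj) exprD (exprNn s); ring.
Qed.

Lemma inv_coef_double m n : inv_coef (2 * n) m n = sigmaSC F m n.
Proof.
rewrite /inv_coef /sigmaSC subnn.
have -> : (2 * n + m - 2 * n = m)%N by lia.
have -> : (2 * n + m - n = n + m)%N by lia.
rewrite fact0 (natrM _ n`! 1) (natrM _ (2 * n)`!) (natrM _ n`!).
by field; rewrite !natf_fact_neq0.
Qed.

Lemma lpoly_moments m (L : {poly F} -> F) :
  (forall p q, L (p + q) = L p + L q) ->
  (forall (c : F) p, L (c *: p) = c * L p) ->
  (forall n, L (lpoly m n s) = (n == 0)%:R) ->
  forall n, L 'X^(2 * n + 1) = 0 /\ L 'X^(2 * n) = (- s) ^+ n * sigmaSC F m n.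
Proof.
move=> L_add L_scale L_lpoly.
have L0 : L 0 = 0 by apply: (addrI (L 0)); rewrite -L_add !addr0.
have L_Xn N : L 'X^N = \sum_(k < N./2.+1 | N == (2 * k)%N) inv_coef N m k * (- s) ^+ k.
  rewrite {1}(Xn_lpoly_expansion m N) (big_morph L L_add L0) [RHS]big_mkcond.
  apply: eq_bigr => k _; rewrite L_scale L_lpoly mulr_natr mulrb.
  have := ltn_ord k; rewrite ltn_half_mul2 => le2kN.
  by rewrite (_ : (N - 2 * k == 0)%N = (N == 2 * k)%N) //; apply/eqP/eqP; lia.
move=> n; split.
  by rewrite L_Xn big_pred0 // => k; apply/negbTE/eqP; lia.
rewrite L_Xn (eq_bigl (fun k : 'I__ => k == n :> nat)) => [|k]; last by apply/eqP/eqP; lia.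
rewrite (big_ord1_eq _ (fun k => inv_coef (2 * n) m k * (- s) ^+ k)).
by rewrite ltn_half_mul2 leqnn inv_coef_double mulrC.
Qed.

End LpolyInversion.

Theorem mainTheorem4 (F : fieldType) (HF : [pchar F] =i pred0) (s : F) :
  (forall m n : nat,
     'X^n = \sum_(k < n./2.+1)
              (((n`!)%:R / ((k`! * (n - 2 * k)`!)%:R))
                 * (((n + m - 2 * k)`!)%:R / ((n + m - k)`!)%:R)
                 * (- s) ^+ k) *: lpoly m (n - 2 * k) s)
  /\
  (forall (m : nat) (L : {poly F} -> F),
     (forall p q, L (p + q) = L p + L q) ->
     (forall (c : F) p, L (c *: p) = c * L p) ->
     (forall n : nat, L (lpoly m n s) = (n == 0%N)%:R) ->
     forall n : nat,
       L 'X^(2 * n + 1) = 0 /\ L 'X^(2 * n) = (- s) ^+ n * sigmaSC F m n).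
Proof. by split=> [m n | m L]; [exact: Xn_lpoly_expansion | exact: lpoly_moments]. Qed.
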